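(* Let $\Lambda$ be a net of quadrics in $\mathbb{P}^5$ which is stable with respect to every one-parameter subgroup of each of the numerical types $\rho_1=(1,1,1,1,1,-5)$, $\rho_2=(1,1,1,1,-2,-2)$, $\rho_3=(1,1,1,-1,-1,-1)$, $\rho_4=(2,2,-1,-1,-1,-1)$, $\rho_5=(5,-1,-1,-1,-1,-1)$. Let $\{x_0,\dots,x_5\}$ be any basis of $V$ and let $(Q_1,Q_2,Q_3)$ be a normalized basis of $\Lambda$ with respect to it. Then: (1) $Q_1,Q_2,Q_3\notin(x_5)$; (2) $(Q_2,Q_3)\not\subseteq(x_4,x_5)$ and $Q_3\notin(x_4,x_5)^2$; (3) $(Q_1,Q_2,Q_3)\not\subseteq(x_3,x_4,x_5)$, and either $(Q_2,Q_3)\not\subseteq(x_3,x_4,x_5)$ or $Q_3\notin(x_3,x_4,x_5)^2$; (4) $(Q_2,Q_3)\not\subseteq(x_2,x_3,x_4,x_5)^2$, and either $(Q_1,Q_2,Q_3)\not\subseteq(x_2,x_3,x_4,x_5)$ or $Q_3\notin(x_2,x_3,x_4,x_5)^2$; (5) $(Q_1,Q_2,Q_3)\not\subseteq(x_1,x_2,x_3,x_4,x_5)$ or $(Q_2,Q_3)\not\subseteq(x_1,x_2,x_3,x_4,x_5)^2$.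
   Context: $V=H^0(\mathbb{P}^5,\mathcal{O}(1))$, $W=H^0(\mathbb{P}^5,\mathcal{O}(2))$; a net of quadrics is a $3$-dimensional subspace $\Lambda\subset W$, a point of $Gr(3,W)\subset\mathbb{P}(\bigwedge^3W)$ with $SL(6)$-action. A 1-PS of numerical type $(a_0,\dots,a_5)$ ($a_0\ge\dots\ge a_5$, $\sum a_k=0$) acts diagonally on some basis $x_0,\dots,x_5$ of $V$ with these weights; weight of $x_ix_j$ is $a_i+a_j$, weight of a Plücker coordinate $x_{i_1}x_{j_1}\wedge x_{i_2}x_{j_2}\wedge x_{i_3}x_{j_3}$ is the sum of the three monomial weights. $\Lambda$ is stable with respect to $\rho$ if some Plücker coordinate not vanishing on $\Lambda$ has positive $\rho$-weight. Given the basis $x_0,\dots,x_5$, order quadratic monomials lexicographically ($x_0^2\succ x_0x_1\succ\cdots$), and let $in_{lex}(Q)$ be the lexicographically largest monomial of $Q$; a normalized basis of $\Lambda$ is a basis $(Q_1,Q_2,Q_3)$ with $in_{lex}(Q_1)\succ_{lex}in_{lex}(Q_2)\succ_{lex}in_{lex}(Q_3)$. For an ideal $I$, $(Q_2,Q_3)\subseteq I$ means $Q_2,Q_3\in I$. *)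

From HB Require Import structures.
From mathcomp Require Import all_boot all_order all_algebra.
From mathcomp Require Import mpoly.
Set Implicit Arguments. Unset Strict Implicit. Unset Printing Implicit Defensive.
Import Order.TTheory GRing.Theory Num.Theory.
Local Open Scope ring_scope.

(* Polynomial ring k[x_0,...,x_5]; 'X_i is the variable x_i (the standard basis of V). *)
Notation poly6 F := {mpoly F[6]}.

Definition is_quadric (F : fieldType) (q : poly6 F) : Prop :=
  forall m, m \in msupp q -> mdeg m = 2%N.

Definition in_span3 (F : fieldType) (P : 'I_3 -> poly6 F) (q : poly6 F) : Prop :=
  exists c : 'I_3 -> F, q = \sum_(i < 3) c i *: P i.

Definition lin_indep3 (F : fieldType) (P : 'I_3 -> poly6 F) : Prop :=
  forall c : 'I_3 -> F, \sum_(i < 3) c i *: P i = 0 -> forall i, c i = 0.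

Definition net_basis (F : fieldType) (P : 'I_3 -> poly6 F) : Prop :=
  (forall i, is_quadric (P i)) /\ lin_indep3 P.

Definition same_net (F : fieldType) (P Q : 'I_3 -> poly6 F) : Prop :=
  (forall i, in_span3 P (Q i)) /\ (forall i, in_span3 Q (P i)).

(* For an invertible matrix h, the substitution
   x_j := \sum_i h j i * y_i  expresses a polynomial Q(x) in terms of the new
   basis y_0..y_5 of V (where y = h^{-1} x); the new coordinates are again
   denoted 'X_0..'X_5.  As h ranges over invertible matrices, y ranges over all
   bases of V. *)
Definition lin_subst (F : fieldType) (h : 'M[F]_6) : 6.-tuple (poly6 F) :=
  [tuple \sum_(i < 6) h j i *: 'X_i | j < 6].

Definition in_basis (F : fieldType) (h : 'M[F]_6) (q : poly6 F) : poly6 F :=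
  q \mPo lin_subst h.

Definition mweight (a : 'I_6 -> int) (m : 'X_{1..6}) : int :=
  \sum_(i < 6) (m i)%:Z * a i.

(* Plucker coordinate x_{m0} /\ x_{m1} /\ x_{m2} of the net with basis q. *)
Definition plucker (F : fieldType) (q : 'I_3 -> poly6 F) (m : 'I_3 -> 'X_{1..6}) : F :=
  \det (\matrix_(i < 3, j < 3) (q i)@_(m j)).

(* Lambda (basis q in current coordinates) is stable wrt the 1-PS acting
   diagonally with weights a on the current basis. *)
Definition stable_wrt (F : fieldType) (a : 'I_6 -> int) (q : 'I_3 -> poly6 F) : Prop :=
  exists m : 'I_3 -> 'X_{1..6},
    (forall j, mdeg (m j) = 2%N) /\ plucker q m != 0 /\ 0 < \sum_(j < 3) mweight a (m j).

(* Stable wrt every 1-PS of numerical type a (i.e. acting diagonally with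
   weights a on some basis of V). *)
Definition stable_type (F : fieldType) (a : 'I_6 -> int) (P : 'I_3 -> poly6 F) : Prop :=
  forall h : 'M[F]_6, h \in unitmx -> stable_wrt a (fun i => in_basis h (P i)).

Definition wt6 (a0 a1 a2 a3 a4 a5 : int) : 'I_6 -> int :=
  fun i => nth 0 [:: a0; a1; a2; a3; a4; a5] i.

Definition rho1 := wt6 1 1 1 1 1 (-5).
Definition rho2 := wt6 1 1 1 1 (-2) (-2).
Definition rho3 := wt6 1 1 1 (-1) (-1) (-1).
Definition rho4 := wt6 2 2 (-1) (-1) (-1) (-1).
Definition rho5 := wt6 5 (-1) (-1) (-1) (-1) (-1).

Definition lex_gt (m1 m2 : 'X_{1..6}) : Prop :=
  exists i : 'I_6, (forall j : 'I_6, (j < i)%N -> m1 j = m2 j) /\ (m2 i < m1 i)%N.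

Definition is_in_lex (F : fieldType) (q : poly6 F) (m : 'X_{1..6}) : Prop :=
  m \in msupp q /\ forall m', m' \in msupp q -> m' != m -> lex_gt m m'.

Definition normalized_basis (F : fieldType) (h : 'M[F]_6) (P Q : 'I_3 -> poly6 F) : Prop :=
  same_net P Q /\
  exists m : 'I_3 -> 'X_{1..6},
    (forall i, is_in_lex (in_basis h (Q i)) (m i)) /\
    lex_gt (m 0) (m 1) /\ lex_gt (m 1) (m 2).

Definition in_ideal (F : fieldType) (gens : seq (poly6 F)) (q : poly6 F) : Prop :=
  exists c : 'I_(size gens) -> poly6 F, q = \sum_(i < size gens) c i * gens`_i.

Definition idx_from (k : nat) : seq 'I_6 := [seq i <- enum 'I_6 | (k <= nat_of_ord i)%N].

Definition gens_lin (F : fieldType) (k : nat) : seq (poly6 F) :=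
  [seq 'X_i | i <- idx_from k].
Definition gens_sq (F : fieldType) (k : nat) : seq (poly6 F) :=
  [seq 'X_i * 'X_j | i <- idx_from k, j <- idx_from k].

From Pilot Require Import Defs.
From HB Require Import structures.
From mathcomp Require Import all_boot all_order all_algebra.
From mathcomp Require Import fingroup perm mpoly ring lra.
From Stdlib Require Import Classical_Prop.
Set Implicit Arguments. Unset Strict Implicit. Unset Printing Implicit Defensive.
Import Order.TTheory GRing.Theory Num.Theory.
Local Open Scope ring_scope.

(* A 1-PS with weight c on x_0..x_(k-1) and d < c on x_k..x_5 gives a quadratic
   monomial weight 2c - (c - d) t, where t is its degree in x_k..x_5.  A nonzero
   Plucker coordinate contains a nonzero term of its determinant, i.e. one monomial
   from each of q_0, q_1, q_2, and changing the basis of the net only rescales the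
   coordinates by a nonzero determinant.  So if every monomial of q_i has t >= l_i
   (e.g. l_i = 1 or 2 when q_i lies in (x_k..x_5) or its square), stability forces
   (c - d)(l_0 + l_1 + l_2) < 6c; each item violates this for one of rho_1..rho_5. *)

Section TailDegree.
Variables (n : nat) (R : nzRingType).
Implicit Types (m u : 'X_{1..n}) (p q : {mpoly R[n]}).

Definition tail_deg (k : nat) m : nat := (\sum_(i < n | (k <= i)%N) m i)%N.

Definition tail_deg_ge (k l : nat) q : Prop :=
  forall m, m \in msupp q -> (l <= tail_deg k m)%N.

Lemma tail_degD k m u : tail_deg k (m + u)%MM = (tail_deg k m + tail_deg k u)%N.
Proof. by rewrite /tail_deg -big_split; apply: eq_bigr => i _; rewrite mnmDE. Qed.

Lemma tail_deg1 k (i : 'I_n) : (k <= i)%N -> tail_deg k U_(i)%MM = 1%N.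
Proof.
move=> ki; rewrite /tail_deg (bigD1 i) //= mnm1E eqxx big1 // => j /andP [_ ji].
by rewrite mnm1E eq_sym (negbTE ji).
Qed.

Lemma tail_deg_ge0 k q : tail_deg_ge k 0 q.
Proof. by []. Qed.

Lemma tail_deg_geX k l u : (l <= tail_deg k u)%N -> tail_deg_ge k l 'X_[u].
Proof. by move=> lu m; rewrite msuppX inE => /eqP ->. Qed.

Lemma tail_deg_geD k l p q :
  tail_deg_ge k l p -> tail_deg_ge k l q -> tail_deg_ge k l (p + q).
Proof. by move=> lp lq m /msuppD_le; rewrite mem_cat => /orP [/lp | /lq]. Qed.

Lemma tail_deg_ge_sum k l (I : Type) (r : seq I) (F : I -> {mpoly R[n]}) :
  (forall i, tail_deg_ge k l (F i)) -> tail_deg_ge k l (\sum_(i <- r) F i).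
Proof.
move=> lF; elim/big_rec: _ => [m|i q _ lq]; first by rewrite msupp0.
exact: tail_deg_geD.
Qed.

Lemma tail_deg_geMl k l p q : tail_deg_ge k l q -> tail_deg_ge k l (p * q).
Proof.
move=> lq m /msuppM_le /allpairsP [[m1 m2] /= [_ m2q ->]].
by rewrite tail_degD (leq_trans (lq _ m2q)) ?leq_addl.
Qed.
End TailDegree.

Arguments tail_deg_ge0 {n R k q}.

Section IdealTailDegree.
Variable F : fieldType.

Lemma in_ideal_tail_deg_ge k l (gens : seq (poly6 F)) q :
  (forall g, g \in gens -> tail_deg_ge k l g) ->
  in_ideal gens q -> tail_deg_ge k l q.
Proof.
move=> lgens [c ->]; apply: tail_deg_ge_sum => i.
exact/tail_deg_geMl/lgens/mem_nth.
Qed.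

Lemma in_ideal_lin_tail_deg k q : in_ideal (gens_lin F k) q -> tail_deg_ge k 1 q.
Proof.
apply: in_ideal_tail_deg_ge => g /mapP [i]; rewrite mem_filter => /andP [ki _] ->.
by apply: tail_deg_geX; rewrite tail_deg1.
Qed.

Lemma in_ideal_sq_tail_deg k q : in_ideal (gens_sq F k) q -> tail_deg_ge k 2 q.
Proof.
apply: in_ideal_tail_deg_ge => g /allpairsP [[i j] /=].
rewrite !mem_filter => -[/andP [ki _] /andP [kj _] ->].
by rewrite -mpolyXD; apply: tail_deg_geX; rewrite tail_degD !tail_deg1.
Qed.
End IdealTailDegree.

Definition two_level (a : 'I_6 -> int) (k : nat) (c d : int) : Prop :=
  forall i : 'I_6, a i = if (k <= i)%N then d else c.

Lemma mweight_two_level (a : 'I_6 -> int) k (c d : int) m :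
  two_level a k c d ->
  Defs.mweight a m = c * (mdeg m)%:Z - (c - d) * (tail_deg k m)%:Z.
Proof.
move=> aE; rewrite /Defs.mweight mdegE /tail_deg -!natz !natr_sum.
rewrite (big_mkcond (fun i : 'I_6 => (k <= i)%N)) !mulr_sumr -sumrB.
apply: eq_bigr => i _; rewrite aE; case: ifP => _; ring.
Qed.

Lemma rho1_two_level : two_level rho1 5 1 (-5).
Proof. by case=> -[|[|[|[|[|[|]]]]]]. Qed.

Lemma rho2_two_level : two_level rho2 4 1 (-2).
Proof. by case=> -[|[|[|[|[|[|]]]]]]. Qed.

Lemma rho3_two_level : two_level rho3 3 1 (-1).
Proof. by case=> -[|[|[|[|[|[|]]]]]]. Qed.

Lemma rho4_two_level : two_level rho4 2 2 (-1).
Proof. by case=> -[|[|[|[|[|[|]]]]]]. Qed.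

Lemma rho5_two_level : two_level rho5 1 5 (-1).
Proof. by case=> -[|[|[|[|[|[|]]]]]]. Qed.

Lemma det_neq0_perm (R : comNzRingType) n (A : 'M[R]_n) :
  \det A != 0 -> exists s : 'S_n, forall i, A i (s i) != 0.
Proof.
have [/existsP [s /forallP nz] _ | /existsPn noperm] :=
  boolP [exists s : 'S_n, [forall i, A i (s i) != 0]]; first by exists s.
rewrite /determinant big1 ?eqxx // => s _.
have /forallPn [i /negPn /eqP Ais] := noperm s.
by rewrite (bigD1 i) //= Ais mul0r mulr0.
Qed.

Section Plucker.
Variable F : fieldType.
Implicit Types (a : 'I_6 -> int) (p q : 'I_3 -> poly6 F).

Lemma stable_wrt_weight_bound a q (b : 'I_3 -> int) :
  (forall i m, m \in msupp (q i) -> mdeg m = 2%N -> Defs.mweight a m <= b i) ->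
  stable_wrt a q -> 0 < \sum_i b i.
Proof.
move=> qb [m [m2 [/det_neq0_perm [s qs] wpos]]].
rewrite (reindex_inj (@perm_inj _ s)) /= in wpos.
apply: (lt_le_trans wpos); apply: ler_sum => i _.
by apply: qb; rewrite ?m2 // mcoeff_msupp; move: (qs i); rewrite mxE.
Qed.

Lemma stable_wrt_span a p q :
  (forall i, in_span3 q (p i)) -> stable_wrt a p -> stable_wrt a q.
Proof.
move=> pq [m [m2 [pm0 wpos]]]; exists m; split=> //; split=> //.
have /fin_all_exists [c pE] := pq.
have pmE : \matrix_(i, j) (p i)@_(m j) =
           \matrix_(i, k) c i k *m \matrix_(k, j) (q k)@_(m j) :> 'M_3.
  apply/matrixP => i j; rewrite !mxE pE linear_sum.
  by apply: eq_bigr => k _; rewrite !mxE; apply: mcoeffZ.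
by move: pm0; rewrite /plucker pmE det_mulmx; apply: contraNneq => ->; rewrite mulr0.
Qed.

Lemma in_span3_in_basis h p (r : poly6 F) :
  in_span3 p r -> in_span3 (fun i => in_basis h (p i)) (in_basis h r).
Proof.
move=> [c ->]; exists c; rewrite /in_basis raddf_sum.
by apply: eq_bigr => i _; apply: comp_mpolyZ.
Qed.

Lemma stable_type_in_basis a h (P Q : 'I_3 -> poly6 F) :
  stable_type a P -> same_net P Q -> h \in unitmx ->
  stable_wrt a (fun i => in_basis h (Q i)).
Proof.
move=> sP [_ QP] hh; apply: stable_wrt_span (sP h hh) => i.
exact: in_span3_in_basis.
Qed.
End Plucker.

Lemma ord3_cases (i : 'I_3) : [\/ i = 0, i = 1 | i = 2].
Proof.
by case: i => -[|[|[|//]]] lt; [constructor 1 | constructor 2 | constructor 3];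
  apply: val_inj.
Qed.

Lemma stable_two_level_tail_bound (F : fieldType) (a : 'I_6 -> int) k (c d : int)
    (q : 'I_3 -> poly6 F) (l0 l1 l2 : nat) :
  two_level a k c d -> d <= c -> stable_wrt a q ->
  tail_deg_ge k l0 (q 0) -> tail_deg_ge k l1 (q 1) -> tail_deg_ge k l2 (q 2) ->
  (c - d) * (l0 + l1 + l2)%:Z < 6 * c.
Proof.
move=> aE dc sq l0q l1q l2q.
pose b i := c * 2%:Z - (c - d) * (nth 0%N [:: l0; l1; l2] i)%:Z.
have wb i m : m \in msupp (q i) -> mdeg m = 2%N -> Defs.mweight a m <= b i.
  move=> mq m2; rewrite (mweight_two_level _ aE) m2 /b lerD2l lerN2.
  rewrite ler_wpM2l ?subr_ge0 // lez_nat.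
  by case: (ord3_cases i) mq => ->; [apply: l0q | apply: l1q | apply: l2q].
rewrite -subr_gt0; apply: lt_le_trans (stable_wrt_weight_bound wb sq) _.
by rewrite !big_ord_recl big_ord0 /b /= !PoszD; lra.
Qed.

Theorem lemma2p1 (F : closedFieldType) (hF : [pchar F] =i pred0)
  (P : 'I_3 -> {mpoly F[6]}) (hP : net_basis P)
  (s1 : stable_type rho1 P) (s2 : stable_type rho2 P) (s3 : stable_type rho3 P)
  (s4 : stable_type rho4 P) (s5 : stable_type rho5 P)
  (h : 'M[F]_6) (hh : h \in unitmx)
  (Q : 'I_3 -> {mpoly F[6]}) (hQ : normalized_basis h P Q) :
  let q := fun i => in_basis h (Q i) in
  (* (1) *)
  (forall i, ~ in_ideal (gens_lin F 5) (q i)) /\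
  (* (2) *)
  (~ (in_ideal (gens_lin F 4) (q 1) /\ in_ideal (gens_lin F 4) (q 2)) /\
   ~ in_ideal (gens_sq F 4) (q 2)) /\
  (* (3) *)
  (~ (forall i, in_ideal (gens_lin F 3) (q i)) /\
   (~ (in_ideal (gens_lin F 3) (q 1) /\ in_ideal (gens_lin F 3) (q 2)) \/
    ~ in_ideal (gens_sq F 3) (q 2))) /\
  (* (4) *)
  (~ (in_ideal (gens_sq F 2) (q 1) /\ in_ideal (gens_sq F 2) (q 2)) /\
   (~ (forall i, in_ideal (gens_lin F 2) (q i)) \/
    ~ in_ideal (gens_sq F 2) (q 2))) /\
  (* (5) *)
  (~ (forall i, in_ideal (gens_lin F 1) (q i)) \/
   ~ (in_ideal (gens_sq F 1) (q 1) /\ in_ideal (gens_sq F 1) (q 2))).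
Proof.
move=> q; have sq a : stable_type a P -> stable_wrt a q.
  by move=> sa; apply: stable_type_in_basis sa hQ.1 hh.
have lin k i : in_ideal (gens_lin F k) (q i) -> tail_deg_ge k 1 (q i).
  exact: in_ideal_lin_tail_deg.
have sqr k i : in_ideal (gens_sq F k) (q i) -> tail_deg_ge k 2 (q i).
  exact: in_ideal_sq_tail_deg.
have B1 := stable_two_level_tail_bound rho1_two_level isT (sq _ s1).
have B2 := stable_two_level_tail_bound rho2_two_level isT (sq _ s2).
have B3 := stable_two_level_tail_bound rho3_two_level isT (sq _ s3).
have B4 := stable_two_level_tail_bound rho4_two_level isT (sq _ s4).
have B5 := stable_two_level_tail_bound rho5_two_level isT (sq _ s5).
split.
  move=> i /lin qi; case: (ord3_cases i) qi => -> qi.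
  - by have := B1 _ _ _ qi tail_deg_ge0 tail_deg_ge0.
  - by have := B1 _ _ _ tail_deg_ge0 qi tail_deg_ge0.
  - by have := B1 _ _ _ tail_deg_ge0 tail_deg_ge0 qi.
split.
  split=> [[/lin q1 /lin q2] | /sqr q2].
  - by have := B2 _ _ _ tail_deg_ge0 q1 q2.
  - by have := B2 _ _ _ tail_deg_ge0 tail_deg_ge0 q2.
split.
  split=> [qs|].
    by have := B3 _ _ _ (lin _ _ (qs 0)) (lin _ _ (qs 1)) (lin _ _ (qs 2)).
  have [/sqr q2 | ] := classic (in_ideal (gens_sq F 3) (q 2)); [left | by right].
  by case=> /lin q1 _; have := B3 _ _ _ tail_deg_ge0 q1 q2.
split.
  split=> [[/sqr q1 /sqr q2] |].
    by have := B4 _ _ _ tail_deg_ge0 q1 q2.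
  have [/sqr q2 | ] := classic (in_ideal (gens_sq F 2) (q 2)); [left | by right].
  by move=> qs; have := B4 _ _ _ (lin _ _ (qs 0)) (lin _ _ (qs 1)) q2.
have [[/sqr q1 /sqr q2] | ] :=
  classic (in_ideal (gens_sq F 1) (q 1) /\ in_ideal (gens_sq F 1) (q 2)); [left | by right].
by move=> qs; have := B5 _ _ _ (lin _ _ (qs 0)) q1 q2.
Qed.
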